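(* If $I\subseteq\Bbbk[x_0,\dots,x_n]$ is a saturated Borel ideal and $I'$ is any expansion of $I$, then $P_{I'}=1+P_I$.
   Context: $\Bbbk$ is an algebraically closed field; $P_J$ denotes the Hilbert polynomial of $\Bbbk[x_0,\dots,x_n]/J$. A monomial ideal $I$ is Borel if for every monomial $m\in I$, every $x_j\mid m$ and every $i<j$, $mx_i/x_j\in I$; it is saturated if $(I:\langle x_0,\dots,x_n\rangle^\infty)=I$. For a monomial $g$, $\max g$ is the largest $j$ with $x_j\mid g$. A minimal monomial generator $g$ of a saturated Borel ideal $I$ is expandable if the set $\{gx_{i+1}/x_i: x_i\mid g,\ 0\le i<n-1\}$ contains no minimal monomial generator of $I$; the expansion of $I$ at $g$ is the ideal $I'$ generated by all monomials of $I$ not divisible by $g$ together with the monomials $gx_j$ for $\max g\le j\le n-1$. (The generator $1$ of the unit ideal is vacuously expandable, with expansion $\langle x_0,\dots,x_{n-1}\rangle$.) *)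

(* Monomials of k[x_0,...,x_n] are exponent vectors. *)
From mathcomp Require Import all_boot all_order all_algebra.
Set Implicit Arguments. Unset Strict Implicit. Unset Printing Implicit Defensive.
Import GRing.Theory Num.Theory.

Definition mono (n : nat) := {ffun 'I_n.+1 -> nat}.

Definition mdeg n (a : mono n) : nat := \sum_(i < n.+1) a i.

Definition mmul n (a b : mono n) : mono n := [ffun i => a i + b i].

Definition mvar n (j : 'I_n.+1) : mono n := [ffun i => nat_of_bool (i == j)].

Definition mdiv n (a b : mono n) : Prop := forall i, a i <= b i.

(* m * x_i / x_j  (only meaningful when x_j | m) *)
Definition mswap n (m : mono n) (i j : nat) : mono n :=
  [ffun k : 'I_n.+1 => m k + nat_of_bool (nat_of_ord k == i)
                          - nat_of_bool (nat_of_ord k == j)].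

(* max g : largest j with x_j | g; by convention 0 for g = 1 *)
Definition mmax n (g : mono n) : nat := \max_(i < n.+1 | 0 < g i) (i : nat).

(* A monomial ideal is represented by the set of monomials it contains;
   such a set is an ideal's monomial set iff it is closed under
   multiplication by monomials. *)
Definition monomial_ideal n (I : mono n -> Prop) : Prop :=
  forall a b, I a -> I (mmul a b).

Definition borel n (I : mono n -> Prop) : Prop :=
  monomial_ideal I /\
  forall (m : mono n) (i j : 'I_n.+1), I m -> 0 < m j -> (i < j)%N ->
    I (mswap m i j).

(* (I : <x_0,...,x_n>^oo) = I, for a monomial ideal:
   a monomial f lies in the saturation iff f * <x_0..x_n>^k is in I for some k,
   i.e. f*b in I for every monomial b of degree k. *)
Definition saturated n (I : mono n -> Prop) : Prop :=
  forall f : mono n,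
    (exists k, forall b : mono n, mdeg b = k -> I (mmul f b)) -> I f.

Definition min_gen n (I : mono n -> Prop) (g : mono n) : Prop :=
  I g /\ forall h, I h -> mdiv h g -> h = g.

Definition expandable n (I : mono n -> Prop) (g : mono n) : Prop :=
  min_gen I g /\
  forall i : nat, (i.+1 < n)%N -> forall Hi : (i < n.+1)%N,
    0 < g (Ordinal Hi) -> ~ min_gen I (mswap g i.+1 i).

Definition expansion n (I : mono n -> Prop) (g : mono n) : mono n -> Prop :=
  fun m =>
    (exists s, I s /\ ~ mdiv g s /\ mdiv s m) \/
    (exists j : 'I_n.+1, (mmax g <= j)%N /\ (j < n)%N /\ mdiv (mmul g (mvar j)) m).

(* Hilbert function of k[x_0..x_n]/I in degree d equals c:
   the standard monomials of degree d form a k-basis, so this is the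
   number of monomials of degree d not in I. *)
Definition hilb_fun_is n (I : mono n -> Prop) (d c : nat) : Prop :=
  exists s : seq (mono n), uniq s /\ size s = c /\
    forall m, m \in s <-> (mdeg m = d /\ ~ I m).

Definition hilbert_poly n (I : mono n -> Prop) (p : {poly rat}) : Prop :=
  exists d0, forall d, (d0 <= d)%N ->
    exists c, hilb_fun_is I d c /\ (p.[d%:R] = c%:R)%R.

(* Every monomial of the expansion I' lies in I.  Conversely, let m be a
   monomial of I outside I'.  Then g divides m (otherwise m itself is a
   generator of I'), and m agrees with g in every x_j with j < n: an excess in
   x_j with j >= max g would make g x_j divide m, and an excess with
   j < t = max g would make m divisible by the Borel move g x_j / x_t, which
   lies in I but is not divisible by g.  So m = g x_n^k.  Such a monomial is
   indeed outside I': since I is saturated and Borel, x_n is a nonzerodivisor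
   modulo I, so a generator s of I dividing g x_n^k stays in I after its x_n
   part is removed; it then divides g, hence equals g by minimality, and g
   divides s.  Thus in every degree d >= deg g the standard monomials of I' are
   those of I together with g x_n^(d - deg g).

   The Hilbert function of a monomial ideal is eventually polynomial by
   induction on the number of variables: by Dickson's lemma the slices of the
   ideal by the exponent of x_0 stabilise, so the Hilbert function is a finite
   sum of shifted Hilbert functions in fewer variables plus a partial sum of
   one of them, and these stay eventually polynomial because every polynomial
   has a polynomial antidifference. *)

From mathcomp Require Import all_boot all_order all_algebra.
From mathcomp Require Import boolp zify ring.
Set Implicit Arguments. Unset Strict Implicit. Unset Printing Implicit Defensive.
Import GRing.Theory Num.Theory.

Section EventuallyPolynomial.
Local Open Scope ring_scope.
Variable R : numFieldType.

Definition ffact_poly (s : nat) : {poly R} := \prod_(i < s) ('X - i%:R%:P).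

Lemma horner_ffact_poly s x : (ffact_poly s).[x] = \prod_(i < s) (x - i%:R).
Proof. by rewrite horner_prod; apply: eq_bigr => i _; rewrite hornerXsubC. Qed.

Lemma size_ffact_poly s : size (ffact_poly s) = s.+1.
Proof.
rewrite /ffact_poly -(big_map (fun i : 'I_s => i%:R) xpredT (fun y => 'X - y%:P)).
by rewrite size_prod_XsubC size_map -[index_enum _]enumT size_enum_ord.
Qed.

Lemma lead_coef_ffact_poly s : (ffact_poly s)`_s = 1.
Proof.
have : ffact_poly s \is monic by apply: monic_prod => i _; apply: monicXsubC.
by move/monicP; rewrite /lead_coef size_ffact_poly.
Qed.

Lemma ffact_poly_diff s x :
  (ffact_poly s.+1).[x + 1] - (ffact_poly s.+1).[x] = s.+1%:R * (ffact_poly s).[x].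
Proof.
rewrite !horner_ffact_poly big_ord_recl big_ord_recr /=.
have shift (i : 'I_s) : x + 1 - (bump 0 i)%:R = x - i%:R by rewrite /bump /= -natr1; ring.
under eq_bigr => i _ do rewrite shift.
by rewrite mulrSr; ring.
Qed.

Lemma poly_antidifference (p : {poly R}) :
  exists q : {poly R}, forall x, q.[x + 1] - q.[x] = p.[x].
Proof.
have [s Hp] : exists s, (size p <= s)%N by exists (size p).
elim: s p Hp => [|s IH] p Hp.
  by exists 0 => x; move: Hp; rewrite leqn0 size_poly_eq0 => /eqP ->; rewrite !horner0 subrr.
pose c := p`_s.
have Hs : (size (p - c *: ffact_poly s)%R <= s)%N.
  apply/leq_sizeP => j; rewrite leq_eqVlt coefB coefZ => /predU1P [<-|Hj].
    by rewrite lead_coef_ffact_poly mulr1 subrr.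
  rewrite !nth_default ?mulr0 ?subrr ?size_ffact_poly //.
  exact: leq_trans Hp Hj.
have [q Hq] := IH _ Hs.
exists (q + (c / s.+1%:R) *: ffact_poly s.+1) => x.
have := Hq x; rewrite !hornerE => Hqx; have Hf := ffact_poly_diff s x.
set F := ffact_poly s.+1.
have -> : q.[x + 1] + c / s.+1%:R * F.[x + 1] - (q.[x] + c / s.+1%:R * F.[x])
  = (q.[x + 1] - q.[x]) + c / s.+1%:R * (F.[x + 1] - F.[x]) by ring.
by rewrite Hqx Hf; field; rewrite nat1r pnatr_eq0.
Qed.

Definition eventually_poly (f : nat -> nat) :=
  exists (p : {poly R}) (d0 : nat), forall d, (d0 <= d)%N -> p.[d%:R] = (f d)%:R.

Lemma eq_eventually_poly f g :
  (exists d1, forall d, (d1 <= d)%N -> f d = g d) ->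
  eventually_poly f -> eventually_poly g.
Proof.
move=> [d1 Efg] [p [d0 Hp]]; exists p, (maxn d0 d1) => d Hd.
by rewrite -Efg ?Hp //; lia.
Qed.

Lemma eventually_poly0 : eventually_poly (fun=> 0%N).
Proof. by exists 0, 0%N => d _; rewrite horner0. Qed.

Lemma eventually_polyD f g :
  eventually_poly f -> eventually_poly g -> eventually_poly (fun d => f d + g d)%N.
Proof.
move=> [p [d0 Hp]] [q [d1 Hq]]; exists (p + q), (maxn d0 d1) => d Hd.
by rewrite natrD hornerD Hp ?Hq //; lia.
Qed.

Lemma eventually_poly_sum K (f : nat -> nat -> nat) :
  (forall k, (k < K)%N -> eventually_poly (f k)) ->
  eventually_poly (fun d => \sum_(k < K) f k d)%N.
Proof.
elim: K => [|K IH] Hf.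
  by apply: eq_eventually_poly eventually_poly0; exists 0%N => d _; rewrite big_ord0.
apply: eq_eventually_poly (eventually_polyD (IH _) (Hf K _)) => //.
  by exists 0%N => d _; rewrite big_ord_recr.
by move=> k Hk; apply: Hf; lia.
Qed.

Lemma eventually_poly_shift f k :
  eventually_poly f -> eventually_poly (fun d => f (d - k))%N.
Proof.
move=> [p [d0 Hp]]; exists (p \Po ('X - k%:R%:P)), (d0 + k)%N => d Hd.
by rewrite horner_comp hornerXsubC -natrB ?Hp //; lia.
Qed.

Lemma eventually_poly_partial_sum f :
  eventually_poly f -> eventually_poly (fun d => \sum_(j < d.+1) f j)%N.
Proof.
move=> [p [d0 Hp]]; have [q Hq] := poly_antidifference p.
pose S := (\sum_(j < d0) f j)%N.
exists (q \Po ('X + 1) - q.[d0%:R]%:P + S%:R%:P), d0 => d.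
rewrite !hornerE horner_comp !hornerE => /subnKC <-.
elim: (d - d0)%N => [|t IHt].
  by rewrite addn0 big_ord_recr /= natrD -Hp // -Hq addrC.
rewrite addnS big_ord_recr /= natrD -IHt -Hp; last by lia.
by rewrite -Hq -natr1; ring.
Qed.
End EventuallyPolynomial.

Fixpoint weak_compositions N d : seq (seq nat) :=
  if N is N'.+1 then [seq k :: u | k <- iota 0 d.+1, u <- weak_compositions N' (d - k)]
  else if d is 0 then [:: [::]] else [::].

Lemma mem_weak_compositions N d s :
  (s \in weak_compositions N d) = (size s == N) && (sumn s == d).
Proof.
elim: N d s => [|N IH] d s.
  by case: d s => [|d] [|k u]; rewrite ?inE.
apply/allpairsPdep/andP => [[k [u [Hk Hu ->]]]|[]].
  move: Hk Hu; rewrite mem_iota IH => /andP [_ Hk] /andP [/eqP Hu /eqP Hs] /=.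
  by rewrite Hu Hs; split => //; apply/eqP; lia.
case: s => [//|k u] /eqP [Hu] /eqP Hd; exists k, u.
by rewrite mem_iota IH Hu eqxx; split => //; move: Hd => /= Hd; apply/eqP; lia.
Qed.

Lemma weak_compositions_uniq N d : uniq (weak_compositions N d).
Proof.
elim: N d => [|N IH] d; first by case: d.
apply: allpairs_uniq_dep => [|k _|[k u] [k' u'] _ _ /= [-> ->] //]; first exact: iota_uniq.
exact: IH.
Qed.

Definition upward_closed (J : seq nat -> Prop) :=
  forall a b, all2 leq a b -> J a -> J b.

Definition finitely_generated N (J : seq nat -> Prop) :=
  exists2 G : seq (seq nat), {in G, forall g, J g} &
    forall m, size m = N -> J m -> exists2 g, g \in G & all2 leq g m.

Lemma all2_leq_refl s : all2 leq s s.
Proof. by elim: s => //= x s ->; rewrite leqnn. Qed.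

Section UpwardClosed.
Variable J : seq nat -> Prop.
Hypothesis J_up : upward_closed J.

Lemma upward_closed_slice k : upward_closed (fun u => J (k :: u)).
Proof. by move=> a b ab; apply: J_up; rewrite /= leqnn. Qed.

Lemma upward_closed_cons_leq k k' u : k <= k' -> J (k :: u) -> J (k' :: u).
Proof. by move=> kk'; apply: J_up; rewrite /= kk' all2_leq_refl. Qed.
End UpwardClosed.

Section DicksonStep.
Variable N : nat.
Hypothesis dicksonN : forall J, upward_closed J -> finitely_generated N J.
Variable J : seq nat -> Prop.
Hypothesis J_up : upward_closed J.

Lemma slices_stabilize :
  exists K, forall k u, K <= k -> size u = N -> J (k :: u) -> J (K :: u).
Proof.
have L_up : upward_closed (fun u => exists k, J (k :: u)).
  by move=> a b ab [k Jka]; exists k; apply: upward_closed_slice ab Jka.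
have [G GL Gen] := dicksonN L_up.
have [K GK] : exists K, {in G, forall g, J (K :: g)}.
  elim: G GL {Gen} => [|g G IHG] GL; first by exists 0.
  have [K GK] := IHG (fun h Gh => GL h (mem_behead (s := g :: G) Gh)).
  have [k Jkg] := GL g (mem_head _ _).
  exists (maxn K k) => h; rewrite inE => /predU1P [->|Gh].
    exact: upward_closed_cons_leq (leq_maxr _ _) Jkg.
  exact: upward_closed_cons_leq (leq_maxl _ _) (GK h Gh).
exists K => k u _ Hu Jku.
have [g Gg gu] := Gen u Hu (ex_intro _ k Jku).
exact: upward_closed_slice gu (GK g Gg).
Qed.

Lemma finitely_generated_below K :
  exists2 H : seq (seq nat), {in H, forall h, J h} &
    forall k u, k < K -> size u = N -> J (k :: u) -> exists2 h, h \in H & all2 leq h (k :: u).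
Proof.
elim: K => [|K [H HJ Gen]]; first by exists [::].
have [G GJ GenK] := dicksonN (upward_closed_slice J_up (k := K)).
exists (H ++ map (cons K) G).
  by move=> h; rewrite mem_cat => /orP [/HJ //|/mapP [g /GJ Jg ->]].
move=> k u; rewrite ltnS leq_eqVlt => /predU1P [-> Hu JKu|kK Hu Jku].
  have [g Gg gu] := GenK u Hu JKu.
  by exists (K :: g); rewrite ?mem_cat ?map_f ?orbT //= leqnn.
have [h Hh hku] := Gen k u kK Hu Jku.
by exists h; rewrite ?mem_cat ?Hh.
Qed.

Lemma finitely_generated_cons : finitely_generated N.+1 J.
Proof.
have [K stable] := slices_stabilize.
have [H HJ Gen] := finitely_generated_below K.
have [G GJ GenK] := dicksonN (upward_closed_slice J_up (k := K)).
exists (H ++ map (cons K) G).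
  by move=> h; rewrite mem_cat => /orP [/HJ //|/mapP [g /GJ Jg ->]].
case=> [//|k u] [Hu] Jku; case: (ltnP k K) => [kK|Kk].
  by have [h Hh hku] := Gen k u kK Hu Jku; exists h; rewrite ?mem_cat ?Hh.
have [g Gg gu] := GenK u Hu (stable k u Kk Hu Jku).
by exists (K :: g); rewrite ?mem_cat ?map_f ?orbT //= Kk.
Qed.
End DicksonStep.

Lemma dickson N J : upward_closed J -> finitely_generated N J.
Proof.
elim: N J => [|N IH] J J_up; last exact: finitely_generated_cons.
have [J0|nJ0] := pselect (J [::]).
  by exists [:: [::]] => [g /[!inE] /eqP -> //|m /size0nil -> _]; exists [::].
by exists [::] => // m /size0nil -> /nJ0.
Qed.

Definition num_standard (J : seq nat -> Prop) N d :=
  count (fun s => ~~ `[< J s >]) (weak_compositions N d).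

Lemma num_standard_cons J N d :
  num_standard J N.+1 d = \sum_(0 <= k < d.+1) num_standard (fun u => J (k :: u)) N (d - k).
Proof.
rewrite /num_standard count_flatten sumnE !big_map /index_iota subn0.
by apply: eq_bigr => k _; rewrite count_map.
Qed.

Lemma sum_nat_sub_rev (F : nat -> nat) K d : K <= d ->
  \sum_(K <= k < d.+1) F (d - k) = \sum_(j < (d - K).+1) F j.
Proof.
move=> Kd; rewrite -{1}(add0n K) big_addn big_mkord -subSn //.
rewrite (reindex_inj rev_ord_inj) /=; apply: eq_bigr => i _.
congr F; have := ltn_ord i; lia.
Qed.

Lemma eventually_poly_num_standard N J :
  upward_closed J -> eventually_poly rat (num_standard J N).
Proof.
elim: N J => [|N IH] J J_up.
  by apply: eq_eventually_poly (eventually_poly0 _); exists 1 => [[|d]].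
have [K stable] := slices_stabilize (@dickson N) J_up.
pose h k := num_standard (fun u => J (k :: u)) N.
have hK k d : K <= k -> h k d = h K d.
  move=> Kk; apply: eq_in_count => u; rewrite mem_weak_compositions => /andP [/eqP Hu _].
  by rewrite (asbool_equiv_eq (conj (stable k u Kk Hu) (upward_closed_cons_leq J_up Kk))).
have IHk k : eventually_poly rat (h k) := IH _ (upward_closed_slice J_up (k := k)).
apply: eq_eventually_poly (eventually_polyD
  (eventually_poly_sum (fun k _ => eventually_poly_shift k (IHk k)))
  (eventually_poly_shift K (eventually_poly_partial_sum (IHk K)))).
exists K => d Kd; rewrite num_standard_cons (big_cat_nat _ (n := K)) //=; last by lia.
rewrite big_mkord -sum_nat_sub_rev //; congr (_ + _).
by apply: eq_big_nat => k /andP [Kk _]; apply/esym/hK.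
Qed.

Lemma ltn_ord_max n (j : 'I_n.+1) : (j < n) = (j != ord_max).
Proof. by rewrite ltn_neqAle -ltnS ltn_ord andbT. Qed.

Section Monomials.
Variable n : nat.
Implicit Types (a b m : mono n).

Definition mvar_exp (j : 'I_n.+1) e : mono n := [ffun i => (i == j) * e].

Lemma mmulA a b m : mmul (mmul a b) m = mmul a (mmul b m).
Proof. by apply/ffunP => i; rewrite !ffunE addnA. Qed.

Lemma mmulC a b : mmul a b = mmul b a.
Proof. by apply/ffunP => i; rewrite !ffunE addnC. Qed.

Lemma mdeg_mmul a b : mdeg (mmul a b) = mdeg a + mdeg b.
Proof. by rewrite /mdeg -big_split; apply: eq_bigr => i _; rewrite ffunE. Qed.

Lemma mdeg_mvar_exp j e : mdeg (mvar_exp j e) = e.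
Proof.
rewrite /mdeg (bigD1 j) //= ffunE eqxx mul1n big1 ?addn0 // => i /negbTE ij.
by rewrite ffunE ij.
Qed.

Lemma mvar_expS j e : mvar_exp j e.+1 = mmul (mvar j) (mvar_exp j e).
Proof. by apply/ffunP => i; rewrite !ffunE mulnS. Qed.

Lemma mvar_exp1 j : mvar_exp j 1 = mvar j.
Proof. by apply/ffunP => i; rewrite !ffunE muln1. Qed.

Lemma mdiv_mmul a b : mdiv a b -> b = mmul a [ffun i => b i - a i].
Proof. by move=> ab; apply/ffunP => i; rewrite !ffunE subnKC. Qed.

Lemma monomial_ideal_mdiv (I : mono n -> Prop) a b :
  monomial_ideal I -> I a -> mdiv a b -> I b.
Proof. by move=> I_ideal Ia /mdiv_mmul ->; apply: I_ideal. Qed.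

Lemma mmax_gt0 a : 0 < mmax a -> exists2 t : 'I_n.+1, (t : nat) = mmax a & 0 < a t.
Proof.
rewrite /mmax; case: (pickP (fun i => 0 < a i)) => [i ai|a0]; last by rewrite big_pred0.
have [|t at_ E] := @eq_bigmax_cond _ [pred i | 0 < a i] (fun i => i : nat).
  by apply/card_gt0P; exists i.
by exists t.
Qed.
End Monomials.

Section MonomialsAsSequences.
Variable n : nat.

Definition mono_of_seq (s : seq nat) : mono n := [ffun i : 'I_n.+1 => nth 0 s i].

Lemma mono_of_fgraph (m : mono n) : mono_of_seq (fgraph m) = m.
Proof. by apply/ffunP => i; rewrite ffunE nth_fgraph_ord. Qed.

Lemma size_fgraph_mono (m : mono n) : size (fgraph m) = n.+1.
Proof. by rewrite size_tuple card_ord. Qed.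

Lemma mono_of_seq_inj : {in [pred s | size s == n.+1] &, injective mono_of_seq}.
Proof.
move=> s t /eqP Hs /eqP Ht st; apply: (@eq_from_nth _ 0) => [|i]; first by rewrite Hs Ht.
by rewrite Hs => Hi; have /ffunP/(_ (Ordinal Hi)) := st; rewrite !ffunE.
Qed.

Lemma mdeg_mono_of_seq s : size s = n.+1 -> mdeg (mono_of_seq s) = sumn s.
Proof.
move=> Hs; rewrite /mdeg sumnE (big_nth 0) Hs big_mkord.
by apply: eq_bigr => i _; rewrite ffunE.
Qed.

Lemma upward_closed_monomial_ideal (I : mono n -> Prop) :
  monomial_ideal I -> upward_closed (fun s => I (mono_of_seq s)).
Proof.
move=> I_ideal a b ab Ia; apply: monomial_ideal_mdiv I_ideal Ia _ => i; rewrite !ffunE.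
elim: a b {i}(i : nat) ab => [|x a IHa] [|y b] // [|i] /= /andP [xy ab] //; exact: IHa.
Qed.

Lemma hilb_fun_num_standard (I : mono n -> Prop) d :
  hilb_fun_is I d (num_standard (fun s => I (mono_of_seq s)) n.+1 d).
Proof.
pose S := [seq s <- weak_compositions n.+1 d | ~~ `[< I (mono_of_seq s) >]].
exists (map mono_of_seq S); split; [|split; [by rewrite size_map size_filter|split]].
- rewrite map_inj_in_uniq ?filter_uniq ?weak_compositions_uniq //.
  move=> s t; rewrite !mem_filter !mem_weak_compositions.
  by move=> /and3P [_ Hs _] /and3P [_ Ht _]; apply: mono_of_seq_inj.
- move=> /mapP [s]; rewrite mem_filter mem_weak_compositions => /and3P [/asboolPn Is /eqP Hs /eqP Hd] ->.
  by rewrite mdeg_mono_of_seq.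
- move=> [Hd Im]; apply/mapP; exists (fgraph m : seq nat); last by rewrite mono_of_fgraph.
  rewrite mem_filter mem_weak_compositions size_fgraph_mono mono_of_fgraph -Hd.
  by rewrite -mdeg_mono_of_seq ?size_fgraph_mono // mono_of_fgraph !eqxx !andbT; apply/asboolPn.
Qed.

Lemma hilbert_poly_exists (I : mono n -> Prop) :
  monomial_ideal I -> exists p, hilbert_poly I p.
Proof.
move=> /upward_closed_monomial_ideal /(eventually_poly_num_standard n.+1) [p [d0 Hp]].
exists p, d0 => d Hd; exists (num_standard (fun s => I (mono_of_seq s)) n.+1 d).
by split; [exact: hilb_fun_num_standard | exact: Hp].
Qed.
End MonomialsAsSequences.

Section SaturatedBorel.
Variable n : nat.
Implicit Types (a b m : mono n).
Local Notation xn := (@ord_max n).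
Variable I : mono n -> Prop.
Hypothesis I_borel : borel I.

Lemma borel_mvar_max a (i : 'I_n.+1) : I (mmul a (mvar xn)) -> I (mmul a (mvar i)).
Proof.
move=> Ia; have [-> //|ixn] := eqVneq i xn.
have := I_borel.2 _ i xn Ia; rewrite !ffunE eqxx addn1 => /(_ isT).
rewrite -ltn_ord_max in ixn => /(_ ixn).
by congr I; apply/ffunP => k; rewrite !ffunE addnAC addnK.
Qed.

Lemma borel_mvar_exp_max e a b :
  mdeg b = e -> I (mmul a (mvar_exp xn e)) -> I (mmul a b).
Proof.
elim: e a b => [|e IH] a b Hb Ia.
  suff -> : b = mvar_exp xn 0 by [].
  by apply/ffunP => i; rewrite ffunE muln0; apply/eqP; rewrite -leqn0 -Hb /mdeg (bigD1 i) ?leq_addr.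
have [i bi|b0] := pickP (fun i => 0 < b i); last first.
  by move: Hb; rewrite /mdeg big1 // => i _; apply/eqP; rewrite -leqn0 leqNgt b0.
pose b' : mono n := [ffun k => b k - (k == i)].
have Eb : b = mmul b' (mvar i).
  apply/ffunP => k; rewrite !ffunE; case: (eqVneq k i) => [->|] /=; last by rewrite subn0 addn0.
  by rewrite subn1 addn1 prednK.
have Hb' : mdeg b' = e by move: Hb; rewrite Eb mdeg_mmul -mvar_exp1 mdeg_mvar_exp addn1 => [[]].
have := IH (mmul a (mvar xn)) b' Hb'; rewrite mmulA -mvar_expS => /(_ Ia).
by rewrite mmulA (mmulC (mvar xn)) -mmulA => /(borel_mvar_max i); rewrite mmulA -Eb.
Qed.

Hypothesis I_sat : saturated I.

Lemma saturated_borel_cancel_xn a e : I (mmul a (mvar_exp xn e)) -> I a.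
Proof. by move=> Ia; apply: I_sat; exists e => b Hb; apply: borel_mvar_exp_max Hb Ia. Qed.
End SaturatedBorel.

Section Expansion.
Variable n : nat.
Implicit Types (m s : mono n).
Local Notation xn := (@ord_max n).
Variables (I : mono n -> Prop) (g : mono n).
Hypothesis I_borel : borel I.
Hypothesis g_min : min_gen I g.

Lemma expansion_sub m : expansion I g m -> I m.
Proof.
have I_ideal := I_borel.1.
case=> [[s [Is [_ sm]]]|[j [_ [_ gjm]]]]; first exact: monomial_ideal_mdiv sm.
exact: monomial_ideal_mdiv (I_ideal _ _ g_min.1) gjm.
Qed.

Lemma notin_expansion_eq m (j : 'I_n.+1) :
  ~ expansion I g m -> mdiv g m -> j < n -> m j = g j.
Proof.
move=> Em gm jn; apply/eqP; rewrite eqn_leq gm andbT leqNgt; apply/negP => gmj.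
have [jmax|maxj] := leqP (mmax g) j.
  apply: Em; right; exists j; do 2!split=> //; move=> k; rewrite !ffunE.
  by case: (eqVneq k j) => [->|_]; rewrite ?addn1 ?addn0.
have [t tmax gt] := mmax_gt0 (leq_ltn_trans (leq0n j) maxj).
have jt : j < t by rewrite tmax.
have [tj jt'] : (nat_of_ord t == j) = false /\ (nat_of_ord j == t) = false.
  by split; apply/negbTE; rewrite neq_ltn jt ?orbT.
apply: Em; left; exists (mswap g j t); split; first exact: I_borel.2 _ _ _ g_min.1 gt jt.
split=> [gs|k].
  by have := gs t; rewrite ffunE eqxx tj addn0 subn1 leqNgt ltn_predL gt.
rewrite ffunE; case: (eqVneq (k : nat) j) => [/val_inj ->|_].
  by rewrite jt' subn0 addn1.
by rewrite addn0 (leq_trans (leq_subr _ _) (gm k)).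
Qed.

Lemma notin_expansion m :
  I m -> ~ expansion I g m -> exists k, m = mmul g (mvar_exp xn k).
Proof.
move=> Im Em.
have gm : mdiv g m.
  apply: contra_notP Em => ngm; left; exists m; split=> //; split=> // i.
exists (m xn - g xn); apply/ffunP => k; rewrite !ffunE.
have [->|kxn] := eqVneq k xn; first by rewrite mul1n subnKC.
by rewrite mul0n addn0 (notin_expansion_eq Em gm) ?ltn_ord_max.
Qed.

Hypothesis I_sat : saturated I.

Lemma mvar_exp_max_notin_expansion k : ~ expansion I g (mmul g (mvar_exp xn k)).
Proof.
case=> [[s [Is [gs sgk]]]|[j [_ [jn gjk]]]].
  pose s' : mono n := [ffun i => if i == xn then 0 else s i].
  have Es : s = mmul s' (mvar_exp xn (s xn)).
    by apply/ffunP => i; rewrite !ffunE; case: eqVneq => [->|]; rewrite ?mul1n ?mul0n ?addn0.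
  have Is' : I s' by apply: (saturated_borel_cancel_xn I_borel I_sat (e := s xn)); rewrite -Es.
  have s'g : mdiv s' g.
    move=> i; rewrite ffunE; case: eqVneq => [//|ixn].
    by have := sgk i; rewrite !ffunE (negbTE ixn) mul0n addn0.
  apply: gs => i; rewrite -(g_min.2 _ Is' s'g) ffunE.
  by case: ifP.
have jxn : (j == xn) = false by apply/negbTE; rewrite -ltn_ord_max.
by have := gjk j; rewrite !ffunE eqxx jxn mul0n addn0 addn1 ltnn.
Qed.
End Expansion.

Lemma hilbert_poly_succ n (I J : mono n -> Prop) (p : {poly rat}) (m0 : nat -> mono n) d1 :
  hilbert_poly I p -> (forall m, J m -> I m) ->
  (forall d, d1 <= d ->
     mdeg (m0 d) = d /\ forall m, mdeg m = d -> (I m /\ ~ J m <-> m = m0 d)) ->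
  hilbert_poly J (1 + p).
Proof.
move=> [d0 HI] JI new; exists (maxn d0 d1) => d Hd.
have [c [[s [s_uniq [s_size s_mem]]] pc]] := HI d (leq_trans (leq_maxl _ _) Hd).
have [m0d new_d] := new d (leq_trans (leq_maxr _ _) Hd).
have [Im0 nJm0] := (new_d _ m0d).2 erefl.
exists c.+1; split; last by rewrite hornerD hornerC pc -natr1 addrC.
exists (m0 d :: s); split; [|split; first by rewrite /= s_size].
  by rewrite /= s_uniq andbT; apply/negP => /s_mem [].
move=> m; rewrite inE; split.
  by case/predU1P => [->|/s_mem [md nIm]]; split=> // /JI.
move=> [md nJm]; have [Im|nIm] := pselect (I m).
  by rewrite ((new_d _ md).1 (conj Im nJm)) eqxx.
by apply/predU1P; right; apply/s_mem.
Qed.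

Theorem lemma5p5 (n : nat) (I : mono n -> Prop) (g : mono n) :
  borel I -> saturated I -> expandable I g ->
  exists p : {poly rat},
    hilbert_poly I p /\ hilbert_poly (expansion I g) (1 + p)%R.
Proof.
move=> I_borel I_sat [g_min _].
have [p Ip] := hilbert_poly_exists I_borel.1.
exists p; split => //.
pose m0 d := mmul g (mvar_exp ord_max (d - mdeg g)).
apply: (hilbert_poly_succ (m0 := m0) (d1 := mdeg g) Ip (expansion_sub I_borel g_min)).
move=> d gd; split=> [|m md]; first by rewrite mdeg_mmul mdeg_mvar_exp; lia.
split=> [[Im nEm]|->].
  have [k Em] := notin_expansion I_borel g_min Im nEm.
  by move: md; rewrite /m0 Em mdeg_mmul mdeg_mvar_exp => <-; rewrite addKn.
split; first exact: I_borel.1 _ _ g_min.1.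
exact: mvar_exp_max_notin_expansion I_borel g_min I_sat _.
Qed.
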